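(* Let $\alpha,\beta$ be nonzero real numbers and $r,x$ real numbers. For every nonnegative integer $m$, the following identity of formal power series in $t$ holds: $$\sum_{n=0}^{\infty}S_{n+m}(x;\alpha,\beta,r)\frac{t^{n}}{n!}=(1+\alpha t)^{\frac{r-m\alpha}{\alpha}}\exp\left(\frac{x}{\beta}\left[(1+\alpha t)^{\frac{\beta}{\alpha}}-1\right]\right)S_{m}\left(x(1+\alpha t)^{\frac{\beta}{\alpha}};\alpha,\beta,r\right).$$
   Context: For a number $t$ and $\alpha$, the generalised factorial is $(t|\alpha)_n=\prod_{j=0}^{n-1}(t-j\alpha)$ for $n\ge 1$ and $(t|\alpha)_0=1$. For parameters $\alpha,\beta,\gamma$, the generalised Stirling numbers $S(n,k,\alpha,\beta,\gamma)$ ($0\le k\le n$) are defined by the polynomial identity $(t|\alpha)_n=\sum_{k=0}^{n}S(n,k,\alpha,\beta,\gamma)\,(t-\gamma|\beta)_k$ in the variable $t$. The generalised exponential polynomials are $S_n(y;\alpha,\beta,r)=\sum_{k=0}^{n}S(n,k,\alpha,\beta,r)\,y^k$. Here $(1+\alpha t)^{c}$ denotes the formal power series $\sum_{j\ge0}\binom{c}{j}\alpha^j t^j$, and $S_m(x(1+\alpha t)^{\beta/\alpha};\alpha,\beta,r)$ means the polynomial $S_m(\cdot;\alpha,\beta,r)$ evaluated at the power series $x(1+\alpha t)^{\beta/\alpha}$. *)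

From HB Require Import structures.
From mathcomp Require Import all_boot all_order all_algebra.
From mathcomp Require Import reals.
From Stdlib Require Import ClassicalEpsilon.
Set Implicit Arguments. Unset Strict Implicit. Unset Printing Implicit Defensive.
Import Order.TTheory GRing.Theory Num.Theory.
Local Open Scope ring_scope.

Section Defs.
Variable R : realType.

(* Generalised factorial (t - g | a)_n as a polynomial in t:
   prod_{j<n} (t - g - j a).  With g = 0 this is (t|a)_n. *)
Definition gfact (g a : R) (n : nat) : {poly R} :=
  \prod_(j < n) ('X - (g + j%:R * a)%:P).

(* Generalised Stirling numbers S(n,k,a,b,g): the (unique) coefficients with
   (t|a)_n = sum_{k=0}^n S(n,k) (t-g|b)_k. *)
Definition gstir_coeffs (a b g : R) (n : nat) : nat -> R :=
  epsilon (inhabits (fun _ : nat => (0 : R)))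
    (fun c : nat -> R =>
       gfact 0 a n = \sum_(k < n.+1) c k *: gfact g b k).

Definition gstir (n k : nat) (a b g : R) : R := gstir_coeffs a b g n k.

Definition gexp_poly (n : nat) (y a b r : R) : R :=
  \sum_(k < n.+1) gstir n k a b r * y ^+ k.

Definition fps := nat -> R.

Definition fps_const (c : R) : fps := fun n => if n is 0%N then c else 0.
Definition fps_add (f g : fps) : fps := fun n => f n + g n.
Definition fps_scale (c : R) (f : fps) : fps := fun n => c * f n.
Definition fps_mul (f g : fps) : fps :=
  fun n => \sum_(i < n.+1) f i * g (n - i)%N.
Definition fps_pow (f : fps) (k : nat) : fps := iter k (fps_mul f) (fps_const 1).

(* exp(f) for f with zero constant term: sum_k f^k / k!; the n-th coefficient
   only involves k <= n since f^k has order >= k. *)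
Definition fps_exp (f : fps) : fps :=
  fun n => \sum_(k < n.+1) fps_pow f k n / (k`!)%:R.

Definition gbinom (c : R) (j : nat) : R := (\prod_(i < j) (c - i%:R)) / (j`!)%:R.

(* (1 + a t)^c = sum_j binom(c,j) a^j t^j *)
Definition fps_binom (a c : R) : fps := fun j => gbinom c j * a ^+ j.

Definition fps_gexp_poly (m : nat) (u : fps) (a b r : R) : fps :=
  fun n => \sum_(k < m.+1) gstir m k a b r * fps_pow u k n.

End Defs.

(* Let D be the derivative of formal power series and T_m the right-hand side.
   The operator (1 + a t) D multiplies (1 + a t)^c by c a, multiplies
   E = exp (x/b ((1 + a t)^(b/a) - 1)) by y = x (1 + a t)^(b/a), and sends P(y)
   to b y P'(y).  Multiplying (t|a)_m = sum_k S(m,k) (t-r|b)_k by t - m a gives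
   the recurrence S_(m+1)(y) = (y + r - m a) S_m(y) + b y S_m'(y), hence
   (1 + a t) D T_m = (1 + a t) T_(m+1), i.e. D T_m = T_(m+1) since 1 + a t is
   cancellable.  The n-th coefficient of T_m is therefore
   (D^n T_m)(0) / n! = T_(m+n)(0) / n! = S_(m+n)(x) / n!. *)

From HB Require Import structures.
From mathcomp Require Import all_boot all_order all_algebra.
From mathcomp Require Import reals boolp ring zify.
From Stdlib Require Import ClassicalEpsilon.
Set Implicit Arguments. Unset Strict Implicit. Unset Printing Implicit Defensive.
Import Order.TTheory GRing.Theory Num.Theory.
Local Open Scope ring_scope.

Section FormalPowerSeries.
Variable R : realType.
Implicit Types (f g h u : fps R) (c : R) (p : {poly R}).
Local Notation fpsC := (@fps_const R).

Lemma fps_addA : associative (@fps_add R).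
Proof. by move=> f g h; apply: funext => n; rewrite /fps_add addrA. Qed.

Lemma fps_addC : commutative (@fps_add R).
Proof. by move=> f g; apply: funext => n; rewrite /fps_add addrC. Qed.

Lemma fps_add0 : left_id (fun _ => 0) (@fps_add R).
Proof. by move=> f; apply: funext => n; rewrite /fps_add add0r. Qed.

Lemma fps_addN : left_inverse (fun _ => 0) (fun f n => - f n) (@fps_add R).
Proof. by move=> f; apply: funext => n; rewrite /fps_add addNr. Qed.

HB.instance Definition _ := Choice.on (fps R).
HB.instance Definition _ :=
  GRing.isZmodule.Build (fps R) fps_addA fps_addC fps_add0 fps_addN.

(* The n-th coefficient of f * g only involves the first n + 1 coefficients of
   f and g, so the ring laws of power series are inherited from {poly R}. *)
Definition fps_trunc n f : {poly R} := \poly_(i < n.+1) f i.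

Lemma coef_fps_trunc n f i : (i <= n)%N -> (fps_trunc n f)`_i = f i.
Proof. by move=> le_in; rewrite coef_poly ltnS le_in. Qed.

Lemma fps_mul_polyE f g (p q : {poly R}) n :
    (forall i, (i <= n)%N -> p`_i = f i) -> (forall i, (i <= n)%N -> q`_i = g i) ->
  fps_mul f g n = (p * q)`_n.
Proof.
move=> pf qg; rewrite coefM; apply: eq_bigr => i _.
by rewrite pf ?qg ?leq_subr // -ltnS.
Qed.

Lemma fps_mul_truncE f g n : fps_mul f g n = (fps_trunc n f * fps_trunc n g)`_n.
Proof. exact: fps_mul_polyE (coef_fps_trunc f) (coef_fps_trunc g). Qed.

Lemma fps_mulC : commutative (@fps_mul R).
Proof. by move=> f g; apply: funext => n; rewrite !fps_mul_truncE mulrC. Qed.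

Lemma fps_mulA : associative (@fps_mul R).
Proof.
move=> f g h; apply: funext => n.
have truncM u v i : (i <= n)%N ->
    (fps_trunc n u * fps_trunc n v)`_i = fps_mul u v i.
  move=> le_in; symmetry; apply: fps_mul_polyE => j le_ji;
  by rewrite coef_fps_trunc // (leq_trans le_ji).
rewrite (@fps_mul_polyE _ _ (fps_trunc n f) (fps_trunc n g * fps_trunc n h))
  ?(@fps_mul_polyE _ _ (fps_trunc n f * fps_trunc n g) (fps_trunc n h)) ?mulrA //.
all: by move=> i le_in; rewrite ?truncM ?coef_fps_trunc.
Qed.

Lemma fps_mul1 : left_id (fpsC 1) (@fps_mul R).
Proof.
move=> f; apply: funext => n; rewrite /fps_mul big_ord_recl subn0 mul1r.
by rewrite big1 ?addr0 // => i _; rewrite mul0r.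
Qed.

Lemma fps_mulDl : left_distributive (@fps_mul R) (@fps_add R).
Proof.
move=> f g h; apply: funext => n; rewrite /fps_add /fps_mul -big_split.
by apply: eq_bigr => i _; rewrite mulrDl.
Qed.

Lemma fps_one_neq0 : fpsC 1 != 0 :> fps R.
Proof. by apply/eqP => /(congr1 (fun f => f 0%N)) /eqP; rewrite oner_eq0. Qed.

HB.instance Definition _ := GRing.Zmodule_isComNzRing.Build (fps R)
  fps_mulA fps_mulC fps_mul1 fps_mulDl fps_one_neq0.

Lemma fps_coefD f g n : (f + g) n = f n + g n. Proof. by []. Qed.
Lemma fps_coefB f g n : (f - g) n = f n - g n. Proof. by []. Qed.
Lemma fps_coefM f g n : (f * g) n = \sum_(i < n.+1) f i * g (n - i)%N.
Proof. by []. Qed.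

Lemma fps_coefMn f k n : (f *+ k) n = f n *+ k.
Proof. by elim: k => [|k IH]; rewrite ?mulr0n // !mulrS fps_coefD IH. Qed.

Lemma fps_coef_sum I (s : seq I) (P : pred I) (F : I -> fps R) n :
  (\sum_(i <- s | P i) F i) n = \sum_(i <- s | P i) F i n.
Proof. exact: (big_morph (fun f : fps R => f n) (id1 := 0) (op1 := +%R)). Qed.

Lemma fps_coefM0 f g : (f * g) 0%N = f 0%N * g 0%N.
Proof. by rewrite fps_coefM big_ord1. Qed.

Lemma fps_coefX0 f k : (f ^+ k) 0%N = f 0%N ^+ k.
Proof. by elim: k => [|k IH]; rewrite ?expr0 // !exprS fps_coefM0 IH. Qed.

Lemma fps_coefX_lt f k n : f 0%N = 0 -> (n < k)%N -> (f ^+ k) n = 0.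
Proof.
move=> f0; elim: k n => [//|k IH] n lt_nk.
rewrite exprS fps_coefM big1 // => -[[|i] lt_in] _ /=; first by rewrite f0 mul0r.
by rewrite IH ?mulr0 //; lia.
Qed.

Lemma fps_powE f k : fps_pow f k = f ^+ k.
Proof. by elim: k => [|k IH]; rewrite ?expr0 // exprS -IH. Qed.

Lemma fps_const_mulE c f n : (fpsC c * f) n = c * f n.
Proof.
rewrite fps_coefM big_ord_recl subn0 big1 ?addr0 // => i _.
by rewrite mul0r.
Qed.

Lemma fps_scaleE c f : fps_scale c f = fpsC c * f.
Proof. by apply: funext => n; rewrite fps_const_mulE. Qed.

Lemma fps_const_is_zmod_morphism : zmod_morphism (@fps_const R).
Proof. by move=> c d; apply: funext => -[|n]; rewrite fps_coefB ?subr0. Qed.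

Lemma fps_const_is_monoid_morphism : monoid_morphism (@fps_const R).
Proof.
by split=> // c d; apply: funext => -[|n]; rewrite fps_const_mulE ?mulr0.
Qed.

HB.instance Definition _ := GRing.isZmodMorphism.Build R (fps R) (@fps_const R)
  fps_const_is_zmod_morphism.
HB.instance Definition _ := GRing.isMonoidMorphism.Build R (fps R) (@fps_const R)
  fps_const_is_monoid_morphism.

Definition fps_deriv f : fps R := fun n => n.+1%:R * f n.+1.

Lemma fps_deriv_is_zmod_morphism : zmod_morphism fps_deriv.
Proof. by move=> f g; apply: funext => n; rewrite /fps_deriv mulrBr. Qed.

HB.instance Definition _ := GRing.isZmodMorphism.Build (fps R) (fps R) fps_deriv
  fps_deriv_is_zmod_morphism.

Lemma fps_deriv_const c : fps_deriv (fpsC c) = 0.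
Proof. by apply: funext => n; rewrite /fps_deriv mulr0. Qed.

Lemma fps_derivM f g : fps_deriv (f * g) = fps_deriv f * g + f * fps_deriv g.
Proof.
apply: funext => n; pose t := fps_trunc n.+1.
have coef_trunc_deriv u i : (i <= n)%N -> (t u)^`()`_i = fps_deriv u i.
  by move=> le_in; rewrite coef_deriv coef_fps_trunc // -mulr_natl.
rewrite fps_coefD /fps_deriv [(f * g) _]fps_mul_truncE mulr_natl -coef_deriv.
rewrite derivM coefD; congr (_ + _); symmetry; apply: fps_mul_polyE => i le_in;
by rewrite ?coef_trunc_deriv ?coef_fps_trunc // ltnW.
Qed.

Lemma fps_deriv_constM c f : fps_deriv (fpsC c * f) = fpsC c * fps_deriv f.
Proof. by rewrite fps_derivM fps_deriv_const mul0r add0r. Qed.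

Lemma fps_derivXS f k : fps_deriv (f ^+ k.+1) = f ^+ k * fps_deriv f *+ k.+1.
Proof.
elim: k => [|k IH]; first by rewrite expr1 expr0 mul1r.
by rewrite exprS fps_derivM IH exprS; ring.
Qed.

Lemma coef_iter_fps_deriv f k n :
  iter k fps_deriv f n * n`!%:R = f (n + k)%N * (n + k)`!%:R.
Proof.
elim: k n => [|k IH] n; first by rewrite addn0.
by rewrite iterS /fps_deriv -addSnnS -IH factS natrM; ring.
Qed.

Lemma fps_exp0 f : fps_exp f 0%N = 1.
Proof. by rewrite /fps_exp big_ord1 /= divr1. Qed.

Lemma fps_expE f N n : f 0%N = 0 -> (n < N)%N ->
  fps_exp f n = \sum_(k < N) (f ^+ k) n / k`!%:R.
Proof.
move=> f0; elim: N => [//|N IH] lt_nN.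
have [lt_nN' | ] := ltnP n N.
  by rewrite big_ord_recr /= -IH // fps_coefX_lt // mul0r addr0.
move=> le_Nn; have -> : N = n by apply/eqP; rewrite eqn_leq le_Nn -ltnS.
by apply: eq_bigr => k _; rewrite fps_powE.
Qed.

Lemma fact_natr_neq0 n : n`!%:R != 0 :> R.
Proof. by rewrite pnatr_eq0 -lt0n fact_gt0. Qed.

Lemma fps_deriv_exp f : f 0%N = 0 -> fps_deriv (fps_exp f) = fps_deriv f * fps_exp f.
Proof.
move=> f0; apply: funext => n.
have -> : fps_deriv (fps_exp f) n = \sum_(k < n.+1) (f ^+ k * fps_deriv f) n / k`!%:R.
  rewrite {1}/fps_deriv (@fps_expE f n.+2 n.+1 f0 (ltnSn _)) mulr_sumr big_ord_recl.
  rewrite expr0 mul0r mulr0 add0r; apply: eq_bigr => k _.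
  rewrite mulrA -[_ * _ n.+1]/(fps_deriv _ n) fps_derivXS fps_coefMn.
  rewrite factS natrM -mulr_natr.
  by field; rewrite fact_natr_neq0 addrC natr1 pnatr_eq0.
rewrite mulrC fps_coefM.
under [RHS]eq_bigr => i _ do rewrite (@fps_expE f n.+1 i f0 (ltn_ord i)) mulr_suml.
rewrite exchange_big /=; apply: eq_bigr => k _.
by rewrite fps_coefM mulr_suml; apply: eq_bigr => i _; ring.
Qed.

Definition one_plus_at (a : R) : fps R :=
  fun n => if n is 0 then 1 else if n is 1 then a else 0.

Lemma one_plus_atM0 a f : (one_plus_at a * f) 0%N = f 0%N.
Proof. by rewrite fps_coefM0 mul1r. Qed.

Lemma one_plus_atMS a f n : (one_plus_at a * f) n.+1 = f n.+1 + a * f n.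
Proof.
rewrite fps_coefM !big_ord_recl subn0 subSS subn0 mul1r big1 ?addr0 // => i _.
by rewrite mul0r.
Qed.

Lemma one_plus_at_mulI a : injective ( *%R (one_plus_at a)).
Proof.
move=> f g eq_fg; apply: funext; elim=> [|n IH].
  by have := congr1 (fun h => h 0%N) eq_fg; rewrite /= !one_plus_atM0.
by have := congr1 (fun h => h n.+1) eq_fg; rewrite /= !one_plus_atMS IH => /addIr.
Qed.

Lemma gbinom0 c : gbinom c 0 = 1.
Proof. by rewrite /gbinom big_ord0 fact0 divr1. Qed.

Lemma gbinomS c n : gbinom c n.+1 * n.+1%:R = gbinom c n * (c - n%:R).
Proof.
rewrite /gbinom big_ord_recr /= factS natrM.
by field; rewrite fact_natr_neq0 addrC natr1 pnatr_eq0.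
Qed.

Lemma gbinom1 c : gbinom c 1 = c.
Proof. by have := gbinomS c 0; rewrite gbinom0 mulr1 subr0 mul1r. Qed.

Lemma gbinom_pascal c n : gbinom (c - 1) n.+1 + gbinom (c - 1) n = gbinom c n.+1.
Proof.
rewrite /gbinom big_ord_recr big_ord_recl /= factS natrM.
under [in RHS]eq_bigr => i _ do rewrite -[bump 0 i]/(1 + i)%N natrD mulr1n opprD addrA.
by field; rewrite fact_natr_neq0 addrC natr1 pnatr_eq0.
Qed.

Lemma fps_binom0 a c : fps_binom a c 0%N = 1.
Proof. by rewrite /fps_binom gbinom0 mulr1. Qed.

Lemma one_plus_at_deriv_binom a c :
  one_plus_at a * fps_deriv (fps_binom a c) = fpsC (c * a) * fps_binom a c.
Proof.
apply: funext => -[|n]; rewrite fps_const_mulE /fps_binom.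
  by rewrite one_plus_atM0 /fps_deriv gbinom1 gbinom0; ring.
rewrite one_plus_atMS /fps_deriv mulrA [_ * gbinom c n.+2]mulrC gbinomS exprS.
ring.
Qed.

Lemma one_plus_at_binom a c :
  one_plus_at a * fps_binom a (c - 1) = fps_binom a c.
Proof.
apply: funext => -[|n]; first by rewrite one_plus_atM0 !fps_binom0.
by rewrite one_plus_atMS /fps_binom -[gbinom c n.+1]gbinom_pascal exprS; ring.
Qed.

Lemma one_plus_at_deriv_exp_binom a c d :
  one_plus_at a * fps_deriv (fps_exp (fpsC c * (fps_binom a d - 1))) =
  fpsC (c * d * a) * fps_binom a d * fps_exp (fpsC c * (fps_binom a d - 1)).
Proof.
have F0 : (fpsC c * (fps_binom a d - 1)) 0%N = 0.
  by rewrite fps_const_mulE fps_coefB fps_binom0 subrr mulr0.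
rewrite fps_deriv_exp // fps_deriv_constM raddfB /= (fps_deriv_const 1) subr0.
by rewrite mulrA mulrCA one_plus_at_deriv_binom !mulrA -rmorphM mulrA.
Qed.

Lemma fps_deriv_horner_map p u :
  fps_deriv (map_poly fpsC p).[u] = (map_poly fpsC p^`()).[u] * fps_deriv u.
Proof.
elim/poly_ind: p => [|p c IH]; first by rewrite deriv0 !rmorph0 horner0 raddf0 mul0r.
rewrite derivMXaddC !rmorphD !rmorphM /= !map_polyX !map_polyC /= !hornerE.
by rewrite raddfD /= fps_derivM fps_deriv_const IH; ring.
Qed.

Lemma coef_horner_map p u N n : (size p <= N)%N ->
  (map_poly fpsC p).[u] n = \sum_(i < N) p`_i * (u ^+ i) n.
Proof.
move=> le_pN; rewrite (@horner_coef_wide _ N) ?size_map_poly // fps_coef_sum.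
by apply: eq_bigr => i _; rewrite coef_map fps_const_mulE.
Qed.

Lemma horner_map_coef0 p u : (map_poly fpsC p).[u] 0%N = p.[u 0%N].
Proof.
rewrite (coef_horner_map _ _ (leqnn _)) horner_coef.
by apply: eq_bigr => i _; rewrite fps_coefX0.
Qed.

End FormalPowerSeries.

Section GeneralisedStirling.
Variables (R : realType) (a b r : R).
Implicit Types (p : {poly R}) (g s : R).

Fixpoint stirling_poly (m : nat) : {poly R} :=
  if m is m'.+1 then
    ('X + (r - m'%:R * a)%:P) * stirling_poly m' + b *: ('X * (stirling_poly m')^`())
  else 1.

Lemma coef_stirling_step p s k :
  (('X + s%:P) * p + b *: ('X * p^`()))`_k =
  (if k is j.+1 then p`_j else 0) + (s + k%:R * b) * p`_k.
Proof.
rewrite mulrDl !coefD coefCM coefZ !coefXM.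
by case: k => [|k]; rewrite /= ?coef_deriv; last rewrite -mulr_natl; ring.
Qed.

Lemma size_stirling_poly m : (size (stirling_poly m) <= m.+1)%N.
Proof.
elim: m => [|m IH] /=; first by rewrite size_poly1.
rewrite (leq_trans (size_polyD _ _)) // geq_max; apply/andP; split.
  by rewrite (leq_trans (size_polyMleq _ _)) // size_XaddC add2n ltnS.
rewrite (leq_trans (size_scale_leq _ _)) // (leq_trans (size_polyMleq _ _)) //.
have [-> | nz_p] := eqVneq (stirling_poly m) 0; first by rewrite deriv0 size_poly0 size_polyX.
rewrite size_polyX add2n ltnS.
exact/ltnW/(leq_trans (lt_size_deriv nz_p) IH).
Qed.

Lemma size_gfact g k : size (gfact g b k) = k.+1.
Proof. by rewrite /gfact -big_enum /= size_prod_XsubC size_enum_ord. Qed.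

Lemma gfactS g h k : gfact g h k.+1 = gfact g h k * ('X - (g + k%:R * h)%:P).
Proof. by rewrite /gfact big_ord_recr. Qed.

Lemma gfact_mulXsubC g k s :
  gfact g b k * ('X - s%:P) = gfact g b k.+1 + (g + k%:R * b - s) *: gfact g b k.
Proof. by rewrite gfactS -mul_polyC polyCB; ring. Qed.

Lemma coef_gfact_top g k : (gfact g b k)`_k = 1.
Proof.
have /monicP := monic_prod_XsubC (index_enum 'I_k) xpredT (fun j : 'I_k => g + j%:R * b).
by rewrite lead_coefE size_gfact.
Qed.

Lemma gfact_coord_inj g n (c d : nat -> R) :
    \sum_(k < n.+1) c k *: gfact g b k = \sum_(k < n.+1) d k *: gfact g b k ->
  forall k, (k <= n)%N -> c k = d k.
Proof.
have coef_top m (e : nat -> R) : (\sum_(k < m.+1) e k *: gfact g b k)`_m = e m.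
  rewrite coef_sum big_ord_recr /= coefZ coef_gfact_top mulr1 big1 ?add0r // => i _.
  by rewrite coefZ nth_default ?mulr0 // size_gfact.
elim: n => [|n IH] eq_cd k.
  by rewrite leqn0 => /eqP ->; rewrite -(coef_top 0%N c) eq_cd coef_top.
have eq_top : c n.+1 = d n.+1 by rewrite -(coef_top n.+1 c) eq_cd coef_top.
rewrite leq_eqVlt => /orP[/eqP -> // | lt_kn].
by apply: IH lt_kn; move: eq_cd; rewrite !big_ord_recr /= eq_top => /addIr.
Qed.

Lemma gfact_sum_mulXsubC p n s : (size p <= n.+1)%N ->
  (\sum_(k < n.+1) p`_k *: gfact r b k) * ('X - s%:P) =
  \sum_(k < n.+2) (('X + (r - s)%:P) * p + b *: ('X * p^`()))`_k *: gfact r b k.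
Proof.
move=> size_p; rewrite mulr_suml.
under eq_bigr => k _ do rewrite -scalerAl gfact_mulXsubC scalerDr scalerA.
under [RHS]eq_bigr => k _ do rewrite coef_stirling_step scalerDl.
rewrite !big_split /= [in RHS]big_ord_recl scale0r add0r; congr (_ + _).
rewrite [RHS]big_ord_recr /= [p`_n.+1]nth_default // mulr0 scale0r addr0.
by apply: eq_bigr => k _; congr (_ *: _); ring.
Qed.

Lemma gfact_stirling_poly m :
  gfact 0 a m = \sum_(k < m.+1) (stirling_poly m)`_k *: gfact r b k.
Proof.
elim: m => [|m IH]; first by rewrite big_ord1 coef1 scale1r /gfact !big_ord0.
by rewrite gfactS IH add0r gfact_sum_mulXsubC ?size_stirling_poly.
Qed.

(* [gstir] is defined by choice; the choice is determined because the
   coordinates in the basis [gfact r b k] are unique. *)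
Lemma gstir_stirling_poly m k : (k <= m)%N -> gstir m k a b r = (stirling_poly m)`_k.
Proof.
pose expands (c : nat -> R) := gfact 0 a m = \sum_(k < m.+1) c k *: gfact r b k.
have expands_gstir : expands (fun k => gstir m k a b r).
  exact: epsilon_spec (ex_intro expands _ (gfact_stirling_poly m)).
by apply: (@gfact_coord_inj r m); rewrite -[LHS]expands_gstir -gfact_stirling_poly.
Qed.

Lemma gexp_polyE m z : gexp_poly m z a b r = (stirling_poly m).[z].
Proof.
rewrite /gexp_poly (horner_coef_wide _ (size_stirling_poly m)).
by apply: eq_bigr => k _; rewrite gstir_stirling_poly // -ltnS.
Qed.

Lemma fps_gexp_polyE m u :
  fps_gexp_poly m u a b r = (map_poly (@fps_const R) (stirling_poly m)).[u].
Proof.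
apply: funext => n; rewrite (coef_horner_map _ _ (size_stirling_poly m)).
by apply: eq_bigr => k _; rewrite gstir_stirling_poly ?fps_powE // -ltnS.
Qed.

End GeneralisedStirling.

Section ShiftedExponentialPolynomials.
Variables (R : realType) (a b r x : R).
Hypotheses (a_neq0 : a != 0) (b_neq0 : b != 0).
Local Notation fpsC := (@fps_const R).

Let y : fps R := fpsC x * fps_binom a (b / a).
Let E : fps R := fps_exp (fpsC (x / b) * (fps_binom a (b / a) - 1)).
Let T m : fps R :=
  fps_binom a ((r - m%:R * a) / a) * E * (map_poly fpsC (stirling_poly a b r m)).[y].

Lemma one_plus_at_deriv_y : one_plus_at a * fps_deriv y = fpsC b * y.
Proof.
by rewrite fps_deriv_constM mulrCA one_plus_at_deriv_binom divfK // mulrCA.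
Qed.

Lemma one_plus_at_deriv_E : one_plus_at a * fps_deriv E = y * E.
Proof. by rewrite one_plus_at_deriv_exp_binom -[x / b * _ * a]mulrA !divfK. Qed.

Lemma fps_deriv_T m : fps_deriv (T m) = T m.+1.
Proof.
pose S k := map_poly fpsC (stirling_poly a b r k).
pose S' := map_poly fpsC (stirling_poly a b r m)^`().
have S_next : (S m.+1).[y] = (fpsC (r - m%:R * a) + y) * (S m).[y] + fpsC b * y * S'.[y].
  rewrite /S /= rmorphD rmorphM rmorphD /= map_polyZ rmorphM /= map_polyX map_polyC.
  by rewrite !hornerE /=; ring.
have deriv_S : one_plus_at a * fps_deriv (S m).[y] = fpsC b * y * S'.[y].
  by rewrite fps_deriv_horner_map mulrCA one_plus_at_deriv_y mulrC.
have c_next : (r - m.+1%:R * a) / a = (r - m%:R * a) / a - 1.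
  by rewrite -natr1; field.
apply: (@one_plus_at_mulI _ a); rewrite /T c_next -/(S m) -/(S m.+1) !mulrA.
rewrite one_plus_at_binom S_next !fps_derivM.
set B := fps_binom a _; set Sy := (S m).[y].
transitivity ((one_plus_at a * fps_deriv B) * E * Sy +
  B * (one_plus_at a * fps_deriv E) * Sy + B * E * (one_plus_at a * fps_deriv Sy)).
  by ring.
by rewrite one_plus_at_deriv_binom one_plus_at_deriv_E deriv_S divfK // /B /Sy; ring.
Qed.

Lemma T_coef0 m : T m 0%N = gexp_poly m x a b r.
Proof.
rewrite /T /E !fps_coefM0 fps_binom0 fps_exp0 !mul1r horner_map_coef0 gexp_polyE.
by rewrite /y fps_const_mulE fps_binom0 mulr1.
Qed.

Lemma gexp_poly_shift_egf m :
  (fun n => gexp_poly (n + m) x a b r / n`!%:R) = T m.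
Proof.
have iter_deriv_T n : iter n (@fps_deriv R) (T m) = T (m + n).
  by elim: n => [|n IH]; rewrite ?addn0 // iterS IH fps_deriv_T addnS.
apply: funext => n; have := coef_iter_fps_deriv (T m) n 0.
rewrite iter_deriv_T T_coef0 !add0n fact0 mulr1 addnC => ->.
by rewrite mulfK // fact_natr_neq0.
Qed.

End ShiftedExponentialPolynomials.

Theorem lemma2 (R : realType) (alpha beta r x : R) (m : nat) :
  alpha != 0 -> beta != 0 ->
  (fun n : nat => gexp_poly (n + m) x alpha beta r / (n`!)%:R)
  = fps_mul
      (fps_mul
         (fps_binom alpha ((r - m%:R * alpha) / alpha))
         (fps_exp (fps_scale (x / beta)
                    (fps_add (fps_binom alpha (beta / alpha)) (fps_const (-1))))))
      (fps_gexp_poly m (fps_scale x (fps_binom alpha (beta / alpha))) alpha beta r).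
Proof.
move=> alpha_neq0 beta_neq0.
by rewrite (gexp_poly_shift_egf r x alpha_neq0 beta_neq0) fps_gexp_polyE !fps_scaleE rmorphN1.
Qed.
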